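(* Let $G=(V,E)$ be a connected simple graph on $n$ vertices and let $c:E\to\mathbb{R}_{\ge 0}$ be any conductance function such that the edges of positive conductance form a connected spanning subgraph of $G$. Then the cyclic cover time of the associated random walk satisfies $CYC[G,c]\ge \frac{1}{2}n^2$.
   Context: For a vertex $v$, $N(v)$ is its set of neighbors. The random walk associated with $(G,c)$ is the Markov chain on $V$ which from the current vertex $v$ moves to $u\in N(v)$ with probability $\frac{c(v,u)}{\sum_{w\in N(v)}c(v,w)}$. The hitting time $H[u,v]$ is the expected number of steps for the walk started at $u$ to reach $v$. The cyclic cover time is $CYC[G,c]=\min_{\sigma}\left(\sum_{i=1}^{n-1}H[v_{\sigma(i)},v_{\sigma(i+1)}]+H[v_{\sigma(n)},v_{\sigma(1)}]\right)$, minimum over all orderings $\sigma$ of the vertices $v_1,\dots,v_n$. *)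

From Stdlib Require Import Reals Arith List Permutation.
Open Scope R_scope.

(* Vertices are 0, ..., n-1.  The graph is given by a boolean adjacency
   relation [adj] and the conductance by [c : nat -> nat -> R]
   (only its values on edges matter). *)

Definition simple_graph (n : nat) (adj : nat -> nat -> bool) : Prop :=
  (forall u v, (u < n)%nat -> (v < n)%nat -> adj u v = adj v u) /\
  (forall u, (u < n)%nat -> adj u u = false) /\
  (forall u v, adj u v = true -> (u < n)%nat /\ (v < n)%nat).

Definition conductance (n : nat) (adj : nat -> nat -> bool) (c : nat -> nat -> R) : Prop :=
  forall u v, adj u v = true -> c u v = c v u /\ 0 <= c u v.

Inductive reach (n : nat) (e : nat -> nat -> Prop) (u : nat) : nat -> Prop :=
  | reach_refl : (u < n)%nat -> reach n e u u
  | reach_step : forall v w, reach n e u v -> e v w -> (w < n)%nat -> reach n e u w.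

Definition connected (n : nat) (e : nat -> nat -> Prop) : Prop :=
  forall u v, (u < n)%nat -> (v < n)%nat -> reach n e u v.

Definition pos_edge (adj : nat -> nat -> bool) (c : nat -> nat -> R) (u v : nat) : Prop :=
  adj u v = true /\ 0 < c u v.

Definition wdeg (n : nat) (adj : nat -> nat -> bool) (c : nat -> nat -> R) (u : nat) : R :=
  sum_f_R0 (fun w => if adj u w then c u w else 0) (pred n).

Definition trans (n : nat) (adj : nat -> nat -> bool) (c : nat -> nat -> R) (u w : nat) : R :=
  if adj u w then c u w / wdeg n adj c u else 0.

(* hit_prob n adj c v t u = P_u(T_v = t), the probability that the walk
   started at u first reaches v at step t (first-step / Markov decomposition
   of the sum over paths u = x_0, ..., x_t = v avoiding v before time t). *)
Fixpoint hit_prob (n : nat) (adj : nat -> nat -> bool) (c : nat -> nat -> R)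
    (v : nat) (t : nat) (u : nat) : R :=
  match t with
  | O => if Nat.eqb u v then 1 else 0
  | S t' => if Nat.eqb u v then 0
            else sum_f_R0 (fun w => trans n adj c u w * hit_prob n adj c v t' w) (pred n)
  end.

Definition is_hitting_time (n : nat) (adj : nat -> nat -> bool) (c : nat -> nat -> R)
    (u v : nat) (h : R) : Prop :=
  infinite_sum (fun t => INR t * hit_prob n adj c v t u) h.

Fixpoint path_sum (H : nat -> nat -> R) (a : nat) (l : list nat) : R :=
  match l with
  | nil => 0
  | b :: l' => H a b + path_sum H b l'
  end.

Definition cyc_sum (H : nat -> nat -> R) (s : list nat) : R :=
  match s with
  | nil => 0
  | a :: s' => path_sum H a (s' ++ a :: nil)
  end.

From Stdlib Require Import Reals List Permutation Lra Lia.
From Coquelicot Require Import Coquelicot.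
Open Scope R_scope.

(* Write d x for the weighted degree, vol for the sum of all degrees and L for the weighted
   Laplacian (L g) x = sum_w c(x,w) (g x - g w).  First-step analysis shows that the walk hits
   every vertex almost surely and that H(., v) solves L H(., v) = d off v.  Two consequences
   follow from the minimum principle and the self-adjointness of L:
   - commute times are large: vol / d u <= H(u,v) + H(v,u);
   - H(u,v) - H(v,u) = E_pi T_v - E_pi T_u, a difference of potentials, so the cyclic sum of H
     equals the cyclic sum of the half commute times (H(x,y) + H(y,x)) / 2.
   Hence CYC >= (vol / 2) * sum_x 1 / d x >= (vol / 2) * n^2 / vol = n^2 / 2 by the
   arithmetic-harmonic mean inequality. *)

Lemma sum_f_R0_opp (f : nat -> R) N : sum_f_R0 (fun i => - f i) N = - sum_f_R0 f N.
Proof. induction N as [|N IH]; simpl; lra. Qed.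

Lemma sum_f_R0_ge_term (f : nat -> R) N j :
  (forall i, (i <= N)%nat -> 0 <= f i) -> (j <= N)%nat -> f j <= sum_f_R0 f N.
Proof.
  induction N as [|N IH]; simpl; intros Hf Hj.
  - replace j with 0%nat by lia. lra.
  - assert (Hlast : 0 <= f (S N)) by (apply Hf; lia).
    destruct (Nat.eq_dec j (S N)) as [->|Hne].
    + assert (0 <= sum_f_R0 f N).
      { rewrite <- (Rmult_0_l (INR (S N))), <- sum_cte.
        apply sum_Rle; intros i Hi; apply Hf; lia. }
      lra.
    + assert (f j <= sum_f_R0 f N) by (apply IH; [intros i Hi; apply Hf|]; lia).
      lra.
Qed.

Lemma sum_f_R0_nonpos_eq0 (f : nat -> R) N :
  (forall i, (i <= N)%nat -> f i <= 0) -> 0 <= sum_f_R0 f N ->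
  forall i, (i <= N)%nat -> f i = 0.
Proof.
  intros Hf Hsum i Hi.
  assert (Hopp : - f i <= sum_f_R0 (fun k => - f k) N).
  { apply (sum_f_R0_ge_term (fun k => - f k)); auto.
    intros k Hk; specialize (Hf k Hk); lra. }
  rewrite sum_f_R0_opp in Hopp. specialize (Hf i Hi). lra.
Qed.

Lemma sum_f_R0_single (f : nat -> R) N j :
  (j <= N)%nat -> (forall i, (i <= N)%nat -> i <> j -> f i = 0) ->
  sum_f_R0 f N = f j.
Proof.
  induction N as [|N IH]; simpl; intros Hj Hf.
  - f_equal. lia.
  - destruct (Nat.eq_dec j (S N)) as [->|Hne].
    + rewrite sum_eq_R0; [lra|]. intros i Hi; apply Hf; lia.
    + rewrite IH, (Hf (S N)); [lra|lia|lia|lia|]. intros i Hi; apply Hf; lia.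
Qed.

Lemma sum_f_R0_swap (F : nat -> nat -> R) N M :
  sum_f_R0 (fun x => sum_f_R0 (fun w => F x w) M) N =
  sum_f_R0 (fun w => sum_f_R0 (fun x => F x w) N) M.
Proof. induction N as [|N IH]; simpl; [reflexivity|]. rewrite IH, <- sum_plus. reflexivity. Qed.

Lemma ex_argmin_le (g : nat -> R) N :
  exists m, (m <= N)%nat /\ forall y, (y <= N)%nat -> g m <= g y.
Proof.
  induction N as [|N [m [Hm Hmin]]].
  - exists 0%nat. split; [lia|]. intros y Hy. replace y with 0%nat by lia. lra.
  - destruct (Rle_dec (g m) (g (S N))).
    + exists m. split; [lia|]. intros y Hy.
      destruct (Nat.eq_dec y (S N)) as [->|]; [lra | apply Hmin; lia].
    + exists (S N). split; [lia|]. intros y Hy.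
      destruct (Nat.eq_dec y (S N)) as [->|]; [lra|].
      specialize (Hmin y ltac:(lia)). lra.
Qed.

(* Summing the tangent-line bound [2/A - d/A^2 <= 1/d] at the mean [A] of the [d i]. *)
Lemma sum_f_R0_inv_ge (d : nat -> R) N :
  (forall i, (i <= N)%nat -> 0 < d i) ->
  INR (S N) ^ 2 / sum_f_R0 d N <= sum_f_R0 (fun i => / d i) N.
Proof.
  intros Hd.
  set (D := sum_f_R0 d N). set (m := INR (S N)).
  assert (Hm : 0 < m) by (apply lt_0_INR; lia).
  assert (HD : 0 < D).
  { apply Rlt_le_trans with (d 0%nat); [apply Hd; lia|].
    apply sum_f_R0_ge_term; [intros i Hi; left; apply Hd|]; lia. }
  set (A := D / m).
  assert (HA : 0 < A) by (apply Rdiv_lt_0_compat; auto).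
  assert (Htangent : forall i, (i <= N)%nat -> 2 / A - d i / A ^ 2 <= / d i).
  { intros i Hi. specialize (Hd i Hi).
    assert (/ d i - (2 / A - d i / A ^ 2) = (A - d i) ^ 2 * / (d i * A ^ 2)) by (field; lra).
    assert (0 <= (A - d i) ^ 2 * / (d i * A ^ 2)).
    { apply Rmult_le_pos; [apply pow2_ge_0|].
      left; apply Rinv_0_lt_compat, Rmult_lt_0_compat; [lra | apply pow_lt; lra]. }
    lra. }
  apply Rle_trans with (sum_f_R0 (fun i => 2 / A - d i / A ^ 2) N); [|apply sum_Rle; auto].
  rewrite minus_sum, sum_cte.
  replace (sum_f_R0 (fun i => d i / A ^ 2) N) with (/ A ^ 2 * D)
    by (unfold D; rewrite scal_sum; reflexivity).
  fold m. right. unfold A. field. lra.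
Qed.

Lemma is_series_head (a : nat -> R) : (forall t, a (S t) = 0) -> is_series a (a 0%nat).
Proof.
  intros Ha.
  replace (a 0%nat) with (/ (1 - 0) * a 0%nat) by field.
  apply (is_series_ext (fun t => 0 ^ t * a 0%nat)).
  - intros [|t]; simpl; [ring | rewrite Ha; ring].
  - apply is_series_scal_r, is_series_geom. rewrite Rabs_R0. lra.
Qed.

Lemma is_series_eq (a : nat -> R) l1 l2 : is_series a l1 -> is_series a l2 -> l1 = l2.
Proof. intros H1 H2. rewrite <- (is_series_unique _ _ H1). exact (is_series_unique _ _ H2). Qed.

Lemma is_series_shift (a : nat -> R) l :
  is_series a l -> a 0%nat = 0 -> is_series (fun t => a (S t)) l.
Proof.
  intros Ha Ha0. apply is_series_incr_1.
  change (plus l (a 0%nat)) with (l + a 0%nat). rewrite Ha0, Rplus_0_r. exact Ha.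
Qed.

Lemma is_series_sum_f_R0 (F : nat -> nat -> R) (L : nat -> R) N :
  (forall w, (w <= N)%nat -> is_series (F w) (L w)) ->
  is_series (fun t => sum_f_R0 (fun w => F w t) N) (sum_f_R0 L N).
Proof.
  induction N as [|N IH]; simpl; intros HF; [apply HF; lia|].
  apply (is_series_plus (fun t => sum_f_R0 (fun w => F w t) N) (F (S N))).
  - apply IH; intros; apply HF; lia.
  - apply HF; lia.
Qed.

Lemma path_sum_potential (G S : nat -> nat -> R) (phi : nat -> R) (P : nat -> Prop) z :
  (forall x y, P x -> P y -> G x y = S x y + phi y - phi x) -> P z ->
  forall l a, P a -> (forall x, In x l -> P x) ->
  path_sum G a (l ++ z :: nil) = path_sum S a (l ++ z :: nil) + phi z - phi a.
Proof.
  intros HG Hz l. induction l as [|b l IH]; intros a Ha Hl; simpl.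
  - rewrite HG by auto. lra.
  - assert (Hb : P b) by (apply Hl; simpl; auto).
    rewrite IH, HG by (auto; intros; apply Hl; simpl; auto). lra.
Qed.

Lemma path_sum_le (G S : nat -> nat -> R) (P : nat -> Prop) z :
  (forall x y, P x -> P y -> x <> y -> G x y <= S x y) -> P z ->
  forall l a, P a -> (forall x, In x l -> P x) ->
  NoDup (a :: l) -> ~ In z l -> (l = nil -> a <> z) ->
  path_sum G a (l ++ z :: nil) <= path_sum S a (l ++ z :: nil).
Proof.
  intros HG Hz l. induction l as [|b l IH]; intros a Ha Hl Hnd Hzl Hnil; simpl.
  - assert (G a z <= S a z) by (apply HG; auto). lra.
  - inversion Hnd as [|? ? Ha_notin Hnd_bl]; subst.
    assert (Hb : P b) by (apply Hl; simpl; auto).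
    assert (G a b <= S a b) by (apply HG; auto; intros ->; apply Ha_notin; simpl; auto).
    assert (path_sum G b (l ++ z :: nil) <= path_sum S b (l ++ z :: nil)).
    { apply IH; auto.
      - intros; apply Hl; simpl; auto.
      - intros Hin; apply Hzl; simpl; auto.
      - intros _ ->. apply Hzl; simpl; auto. }
    lra.
Qed.

Definition lsum (g : nat -> R) (l : list nat) : R := fold_right (fun x acc => g x + acc) 0 l.

Lemma lsum_perm g l1 l2 : Permutation l1 l2 -> lsum g l1 = lsum g l2.
Proof. induction 1; simpl; lra. Qed.

Lemma lsum_app g l1 l2 : lsum g (l1 ++ l2) = lsum g l1 + lsum g l2.
Proof. induction l1 as [|x l1 IH]; simpl; [ring|]. rewrite IH. ring. Qed.

Lemma lsum_seq g m : lsum g (seq 0 (S m)) = sum_f_R0 g m.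
Proof.
  induction m as [|m IH]; [simpl; ring|].
  rewrite seq_S, lsum_app, IH. simpl. ring.
Qed.

Lemma path_sum_ends (g : nat -> R) z l a :
  path_sum (fun x y => g x + g y) a (l ++ z :: nil) = g a + 2 * lsum g l + g z.
Proof. revert a; induction l as [|b l IH]; intros a; simpl; [ring|]. rewrite IH. ring. Qed.

Lemma cyc_sum_potential (G S : nat -> nat -> R) (phi : nat -> R) s :
  (forall x y, In x s -> In y s -> G x y = S x y + phi y - phi x) ->
  cyc_sum G s = cyc_sum S s.
Proof.
  destruct s as [|a s]; simpl; [reflexivity|]. intros HG.
  rewrite (path_sum_potential G S phi (fun x => In x (a :: s)) a); simpl; auto; lra.
Qed.

Lemma cyc_sum_le (G S : nat -> nat -> R) s :
  NoDup s -> (2 <= length s)%nat ->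
  (forall x y, In x s -> In y s -> x <> y -> G x y <= S x y) ->
  cyc_sum G s <= cyc_sum S s.
Proof.
  destruct s as [|a s]; simpl; intros Hnd Hlen HG; [lra|].
  apply (path_sum_le G S (fun x => In x (a :: s))); simpl; auto.
  - inversion Hnd; auto.
  - intros ->. simpl in Hlen. lia.
Qed.

Lemma cyc_sum_ends (g : nat -> R) s : cyc_sum (fun x y => g x + g y) s = 2 * lsum g s.
Proof. destruct s as [|a s]; simpl; [ring|]. rewrite path_sum_ends. ring. Qed.

Section RandomWalk.

Variables (n : nat) (adj : nat -> nat -> bool) (c : nat -> nat -> R).
Hypothesis n_ge2 : (2 <= n)%nat.
Hypothesis adj_simple : simple_graph n adj.
Hypothesis c_conductance : conductance n adj c.
Hypothesis pos_connected : connected n (pos_edge adj c).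

Local Notation sumV f := (sum_f_R0 f (pred n)).
Local Notation d := (wdeg n adj c).

Definition weight (x w : nat) : R := if adj x w then c x w else 0.

Definition laplacian (g : nat -> R) (x : nat) : R := sumV (fun w => weight x w * (g x - g w)).

Definition volume : R := sumV d.

Lemma wdeg_weight x : d x = sumV (weight x).
Proof. reflexivity. Qed.

Lemma weight_nonneg x w : 0 <= weight x w.
Proof. unfold weight. destruct (adj x w) eqn:E; [apply (c_conductance _ _ E) | lra]. Qed.

Lemma weight_sym x w : (x < n)%nat -> (w < n)%nat -> weight x w = weight w x.
Proof.
  intros Hx Hw. destruct adj_simple as [Hsym _]. unfold weight.
  rewrite (Hsym x w Hx Hw). destruct (adj w x) eqn:E; [|reflexivity].
  symmetry. apply (c_conductance _ _ E).
Qed.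

Lemma wdeg_nonneg x : 0 <= d x.
Proof. apply cond_pos_sum. intros; apply weight_nonneg. Qed.

Lemma wdeg_pos x : (x < n)%nat -> 0 < d x.
Proof.
  intros Hx.
  set (y := if Nat.eqb x 0 then 1%nat else 0%nat).
  assert (Hy : (y < n)%nat /\ y <> x) by (unfold y; destruct (Nat.eqb_spec x 0); lia).
  destruct Hy as [Hy Hyx].
  assert (Hreach := pos_connected y x Hy Hx).
  inversion Hreach as [|v w _ [Hvw Hpos] _]; [congruence|]. subst w.
  destruct adj_simple as [Hsym [_ Hrange]]. destruct (Hrange _ _ Hvw) as [Hv _].
  apply Rlt_le_trans with (weight x v).
  - unfold weight. rewrite <- (Hsym v x Hv Hx), Hvw.
    rewrite (proj1 (c_conductance _ _ Hvw)) in Hpos. lra.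
  - apply sum_f_R0_ge_term; [intros; apply weight_nonneg | lia].
Qed.

Lemma volume_pos : 0 < volume.
Proof.
  apply Rlt_le_trans with (d 0%nat); [apply wdeg_pos; lia|].
  apply sum_f_R0_ge_term; [intros; apply wdeg_nonneg | lia].
Qed.

Lemma trans_weight x w : trans n adj c x w = weight x w / d x.
Proof. unfold trans, weight. destruct (adj x w); [reflexivity | unfold Rdiv; ring]. Qed.

Lemma trans_nonneg x w : 0 <= trans n adj c x w.
Proof.
  rewrite trans_weight. destruct (Rle_lt_or_eq _ _ (wdeg_nonneg x)) as [Hd|Hd].
  - apply Rdiv_le_0_compat; [apply weight_nonneg | exact Hd].
  - rewrite <- Hd. unfold Rdiv. rewrite Rinv_0. lra.
Qed.

Lemma laplacian_step g x r :
  (x < n)%nat -> g x = sumV (fun w => trans n adj c x w * (r + g w)) ->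
  laplacian g x = r * d x.
Proof.
  intros Hx Hg. assert (Hd := wdeg_pos x Hx).
  assert (Hmean : g x * d x = r * d x + sumV (fun w => weight x w * g w)).
  { rewrite Hg at 1. rewrite Rmult_comm, scal_sum, wdeg_weight, scal_sum, <- sum_plus.
    apply sum_eq; intros w _. rewrite trans_weight, <- wdeg_weight. field. lra. }
  transitivity (g x * d x - sumV (fun w => weight x w * g w)); [|lra].
  unfold laplacian. rewrite wdeg_weight, scal_sum, <- minus_sum.
  apply sum_eq; intros; ring.
Qed.

Lemma laplacian_selfadjoint f g :
  sumV (fun x => f x * laplacian g x) = sumV (fun x => g x * laplacian f x).
Proof.
  assert (Hexpand : forall f g, sumV (fun x => f x * laplacian g x) =
      sumV (fun x => sumV (fun w => weight x w * (f x * g x))) -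
      sumV (fun x => sumV (fun w => weight x w * f x * g w))).
  { intros f' g'. rewrite <- minus_sum. apply sum_eq; intros x _.
    unfold laplacian. rewrite scal_sum, <- minus_sum. apply sum_eq; intros; ring. }
  assert (Hcross : sumV (fun x => sumV (fun w => weight x w * f x * g w)) =
      sumV (fun x => sumV (fun w => weight x w * g x * f w))).
  { rewrite (sum_f_R0_swap (fun x w => weight x w * f x * g w)).
    apply sum_eq; intros x Hx; apply sum_eq; intros w Hw.
    rewrite weight_sym by lia. ring. }
  rewrite !Hexpand, Hcross. f_equal.
  apply sum_eq; intros; apply sum_eq; intros; ring.
Qed.

Lemma laplacian_sum_eq0 g : sumV (laplacian g) = 0.
Proof.
  transitivity (sumV (fun x => 1 * laplacian g x)); [apply sum_eq; intros; ring|].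
  rewrite laplacian_selfadjoint. apply sum_eq_R0; intros x _.
  unfold laplacian. rewrite sum_eq_R0; [ring | intros; ring].
Qed.

Lemma laplacian_minus f g x : laplacian (fun y => f y - g y) x = laplacian f x - laplacian g x.
Proof. unfold laplacian. rewrite <- minus_sum. apply sum_eq; intros; ring. Qed.

Lemma laplacian_const k x : laplacian (fun _ => k) x = 0.
Proof. apply sum_eq_R0; intros; ring. Qed.

(* At a minimum every term [weight x w * (g x - g w)] of the Laplacian is nonpositive,
   hence zero. *)
Lemma laplacian_nonneg_at_min g x w :
  (forall y, (y < n)%nat -> g x <= g y) -> 0 <= laplacian g x ->
  pos_edge adj c x w -> g w = g x.
Proof.
  intros Hmin HL [Hxw Hpos].
  destruct adj_simple as [_ [_ Hrange]]. destruct (Hrange _ _ Hxw) as [_ Hw].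
  assert (Hterm : weight x w * (g x - g w) = 0).
  { apply (sum_f_R0_nonpos_eq0 (fun w => weight x w * (g x - g w)) (pred n)); auto; [|lia].
    intros i Hi. assert (0 <= weight x i) by apply weight_nonneg.
    assert (g x <= g i) by (apply Hmin; lia). nra. }
  unfold weight in Hterm. rewrite Hxw in Hterm.
  apply Rmult_integral in Hterm. lra.
Qed.

Lemma laplacian_min_principle g v :
  (v < n)%nat -> (forall x, (x < n)%nat -> x <> v -> 0 <= laplacian g x) ->
  forall y, (y < n)%nat -> g v <= g y.
Proof.
  intros Hv HL.
  destruct (ex_argmin_le g (pred n)) as [m [Hm Hmin]].
  assert (Hmin' : forall y, (y < n)%nat -> g m <= g y) by (intros; apply Hmin; lia).
  assert (Hspread : forall y, reach n (pos_edge adj c) m y -> g y = g m \/ g v = g m).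
  { intros y Hr. induction Hr as [|z w _ [IH|IH] Hzw _]; auto.
    destruct (Nat.eq_dec z v) as [->|Hzv]; auto.
    assert (Hz : (z < n)%nat)
      by (destruct adj_simple as [_ [_ Hrange]]; apply (Hrange _ _ (proj1 Hzw))).
    left. rewrite <- IH. apply (laplacian_nonneg_at_min g z w); auto.
    intros y Hy. rewrite IH. auto. }
  intros y Hy.
  destruct (Hspread v (pos_connected m v ltac:(lia) Hv)) as [Hvm|Hvm]; rewrite Hvm; auto.
Qed.

Local Notation hp := (hit_prob n adj c).

Lemma hit_prob_nonneg v t x : 0 <= hp v t x.
Proof.
  revert x; induction t as [|t IH]; intros x; simpl; destruct (Nat.eqb x v); try lra.
  apply cond_pos_sum; intros w. apply Rmult_le_pos; [apply trans_nonneg | apply IH].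
Qed.

Lemma hit_prob_start v x : x <> v -> hp v 0 x = 0.
Proof. intros Hxv. simpl. destruct (Nat.eqb_spec x v); [congruence | reflexivity]. Qed.

Lemma hit_prob_succ v t x :
  x <> v -> hp v (S t) x = sumV (fun w => trans n adj c x w * hp v t w).
Proof. intros Hxv. simpl. destruct (Nat.eqb_spec x v); [congruence | reflexivity]. Qed.

Lemma hit_prob_target_succ v t : hp v (S t) v = 0.
Proof. simpl. rewrite Nat.eqb_refl. reflexivity. Qed.

Lemma is_series_hit_prob_target v : is_series (fun t => hp v t v) 1.
Proof.
  replace 1 with (hp v 0 v) by (simpl; rewrite Nat.eqb_refl; reflexivity).
  apply is_series_head, hit_prob_target_succ.
Qed.

Lemma is_series_first_step (m l : nat -> R) v x :
  x <> v -> (forall w, (w < n)%nat -> is_series (fun t => m t * hp v t w) (l w)) ->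
  is_series (fun t => m t * hp v (S t) x) (sumV (fun w => trans n adj c x w * l w)).
Proof.
  intros Hxv Hl.
  apply (is_series_ext (fun t => sumV (fun w => trans n adj c x w * (m t * hp v t w)))).
  { intros t. rewrite hit_prob_succ, scal_sum by exact Hxv. apply sum_eq; intros; ring. }
  apply (is_series_sum_f_R0 (fun w t => trans n adj c x w * (m t * hp v t w))).
  intros w Hw. exact (is_series_scal _ _ _ (Hl w ltac:(lia))).
Qed.

Definition hit_total (v x : nat) : R := Series (fun t => hp v t x).

Variable H : nat -> nat -> R.
Hypothesis H_hitting :
  forall u v, (u < n)%nat -> (v < n)%nat -> is_hitting_time n adj c u v (H u v).

Lemma is_series_hitting_time u v :
  (u < n)%nat -> (v < n)%nat -> is_series (fun t => INR t * hp v t u) (H u v).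
Proof. intros Hu Hv. apply is_series_Reals, H_hitting; auto. Qed.

Lemma hitting_time_target v : (v < n)%nat -> H v v = 0.
Proof.
  intros Hv.
  assert (Hzero : is_series (fun t => INR t * hp v t v) (INR 0 * hp v 0 v)).
  { apply is_series_head. intros t. rewrite hit_prob_target_succ. ring. }
  rewrite <- (is_series_unique _ _ (is_series_hitting_time v v Hv Hv)).
  rewrite (is_series_unique _ _ Hzero).
  simpl. ring.
Qed.

Lemma is_series_hit_total v x :
  (v < n)%nat -> (x < n)%nat -> is_series (fun t => hp v t x) (hit_total v x).
Proof.
  intros Hv Hx. apply Series_correct.
  destruct (Nat.eq_dec x v) as [->|Hxv]; [exists 1; apply is_series_hit_prob_target|].
  apply (@ex_series_le R_AbsRing R_CompleteNormedModule _ (fun t => INR t * hp v t x)).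
  - intros [|t]; change norm with Rabs; rewrite Rabs_right by (apply Rle_ge, hit_prob_nonneg).
    + rewrite hit_prob_start by exact Hxv. simpl. lra.
    + assert (1 <= INR (S t)) by (apply (le_INR 1); lia).
      assert (Hp := hit_prob_nonneg v (S t) x). nra.
  - exists (H x v). apply is_series_hitting_time; auto.
Qed.

Lemma hit_total_step v x :
  (v < n)%nat -> (x < n)%nat -> x <> v ->
  hit_total v x = sumV (fun w => trans n adj c x w * hit_total v w).
Proof.
  intros Hv Hx Hxv.
  apply (is_series_eq (fun t => 1 * hp v (S t) x)).
  - apply (is_series_ext (fun t => hp v (S t) x)); [intros t; simpl; ring|].
    apply (is_series_shift (fun t => hp v t x));
      [apply is_series_hit_total | apply hit_prob_start]; auto.
  - apply is_series_first_step; auto. intros w Hw.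
    apply (is_series_ext (fun t => hp v t w));
      [intros t; simpl; ring | apply is_series_hit_total; auto].
Qed.

(* The walk hits [v] almost surely: [hit_total v] is harmonic off [v] and equals [1] at [v],
   so the minimum principle applied to it and to its negative makes it constant. *)
Lemma hit_total_eq1 v x : (v < n)%nat -> (x < n)%nat -> hit_total v x = 1.
Proof.
  intros Hv Hx.
  assert (Htarget : hit_total v v = 1) by (apply is_series_unique, is_series_hit_prob_target).
  assert (Harmonic : forall y, (y < n)%nat -> y <> v -> laplacian (hit_total v) y = 0).
  { intros y Hy Hyv. rewrite (laplacian_step _ y 0); [ring | exact Hy|].
    rewrite hit_total_step by auto. apply sum_eq; intros; ring. }
  assert (Hge : hit_total v v <= hit_total v x).
  { apply laplacian_min_principle; auto. intros y Hy Hyv. rewrite Harmonic; auto; lra. }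
  assert (Hle : 0 - hit_total v v <= 0 - hit_total v x).
  { apply (laplacian_min_principle (fun y => 0 - hit_total v y)); auto.
    intros y Hy Hyv. rewrite laplacian_minus, laplacian_const, Harmonic; auto; lra. }
  lra.
Qed.

Lemma hitting_time_step v x :
  (v < n)%nat -> (x < n)%nat -> x <> v ->
  H x v = sumV (fun w => trans n adj c x w * (1 + H w v)).
Proof.
  intros Hv Hx Hxv.
  apply (is_series_eq (fun t => INR (S t) * hp v (S t) x)).
  - apply (is_series_shift (fun t => INR t * hp v t x)); [apply is_series_hitting_time; auto|].
    rewrite hit_prob_start by exact Hxv. ring.
  - apply is_series_first_step; auto. intros w Hw.
    apply (is_series_ext (fun t => hp v t w + INR t * hp v t w));
      [intros t; rewrite S_INR; simpl; ring|].
    rewrite <- (hit_total_eq1 v w) by auto.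
    apply (is_series_plus (fun t => hp v t w) (fun t => INR t * hp v t w));
      [apply is_series_hit_total | apply is_series_hitting_time]; auto.
Qed.

Lemma laplacian_hitting_time v x :
  (v < n)%nat -> (x < n)%nat -> x <> v -> laplacian (fun y => H y v) x = d x.
Proof.
  intros Hv Hx Hxv. rewrite (laplacian_step _ x 1); [ring | exact Hx|].
  apply hitting_time_step; auto.
Qed.

Lemma laplacian_hitting_time_target v :
  (v < n)%nat -> laplacian (fun y => H y v) v = d v - volume.
Proof.
  intros Hv.
  assert (Hsingle : sumV (fun x => laplacian (fun y => H y v) x - d x) =
                    laplacian (fun y => H y v) v - d v).
  { apply (sum_f_R0_single (fun x => laplacian (fun y => H y v) x - d x)); [lia|].
    intros x Hx Hxv. rewrite laplacian_hitting_time by (auto; lia). ring. }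
  rewrite minus_sum, laplacian_sum_eq0 in Hsingle. unfold volume. lra.
Qed.

Lemma sum_mul_laplacian_hitting_time f v :
  (v < n)%nat ->
  sumV (fun x => f x * laplacian (fun y => H y v) x) =
  sumV (fun x => f x * d x) - f v * volume.
Proof.
  intros Hv.
  transitivity (sumV (fun x => f x * (laplacian (fun y => H y v) x - d x)) +
                sumV (fun x => f x * d x)).
  - rewrite <- sum_plus. apply sum_eq; intros; ring.
  - rewrite (sum_f_R0_single _ _ v); [| lia |].
    + rewrite laplacian_hitting_time_target by exact Hv. ring.
    + intros x Hx Hxv. rewrite laplacian_hitting_time by (auto; lia). ring.
Qed.

Definition stationary_hitting_time (u : nat) : R := sumV (fun x => H x u * d x) / volume.

(* Self-adjointness of the Laplacian, tested on [H(., u)] and [H(., v)]. *)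
Lemma hitting_time_antisym u v :
  (u < n)%nat -> (v < n)%nat ->
  H u v - H v u = stationary_hitting_time v - stationary_hitting_time u.
Proof.
  intros Hu Hv.
  assert (Hpair := laplacian_selfadjoint (fun y => H y u) (fun y => H y v)).
  rewrite !sum_mul_laplacian_hitting_time in Hpair by auto.
  assert (Hvol := volume_pos).
  unfold stationary_hitting_time. apply (Rmult_eq_reg_l volume); [|lra].
  field_simplify; lra.
Qed.

(* [f = H(., v) - H(., u)] has Laplacian [0] off [{u, v}] and [volume > 0] at [u], so the
   minimum principle puts its minimum at [v]; comparing with the Laplacian at [u] gives
   [volume <= d u * (f u - f v)]. *)
Lemma commute_time_ge u v :
  (u < n)%nat -> (v < n)%nat -> u <> v -> volume / d u <= H u v + H v u.
Proof.
  intros Hu Hv Huv.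
  set (f := fun y => H y v - H y u).
  assert (Hlap_u : laplacian f u = volume).
  { unfold f. rewrite laplacian_minus, laplacian_hitting_time, laplacian_hitting_time_target; auto.
    ring. }
  assert (Hmin : forall y, (y < n)%nat -> f v <= f y).
  { apply laplacian_min_principle; auto. intros x Hx Hxv.
    destruct (Nat.eq_dec x u) as [->|Hxu]; [rewrite Hlap_u; left; apply volume_pos|].
    unfold f. rewrite laplacian_minus, !laplacian_hitting_time by auto. lra. }
  assert (Hbound : volume <= d u * (f u - f v)).
  { rewrite <- Hlap_u. unfold laplacian. rewrite wdeg_weight, Rmult_comm, scal_sum.
    apply sum_Rle; intros w Hw. assert (0 <= weight u w) by apply weight_nonneg.
    assert (f v <= f w) by (apply Hmin; lia). nra. }
  assert (Hfuv : f u - f v = H u v + H v u).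
  { unfold f. rewrite !hitting_time_target by auto. ring. }
  assert (Hdu := wdeg_pos u Hu).
  rewrite Hfuv in Hbound. apply Rmult_le_reg_l with (d u); auto.
  replace (d u * (volume / d u)) with volume by (field; lra). exact Hbound.
Qed.

Lemma sum_inv_wdeg_ge : INR n ^ 2 / volume <= sumV (fun x => / d x).
Proof.
  replace n with (S (pred n)) at 1 by lia.
  apply sum_f_R0_inv_ge. intros; apply wdeg_pos; lia.
Qed.

Lemma half_commute_time_ge x y :
  (x < n)%nat -> (y < n)%nat -> x <> y ->
  volume / 4 / d x + volume / 4 / d y <= (H x y + H y x) / 2.
Proof.
  intros Hx Hy Hxy.
  assert (volume / d x <= H x y + H y x) by (apply commute_time_ge; auto).
  assert (volume / d y <= H y x + H x y) by (apply commute_time_ge; auto).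
  assert (Hdx := wdeg_pos x Hx). assert (Hdy := wdeg_pos y Hy).
  replace (volume / 4 / d x) with (volume / d x / 4) by (field; lra).
  replace (volume / 4 / d y) with (volume / d y / 4) by (field; lra).
  lra.
Qed.

Lemma cyc_sum_hitting_time_ge s :
  Permutation s (seq 0 n) -> volume / 2 * sumV (fun x => / d x) <= cyc_sum H s.
Proof.
  intros Hperm.
  assert (Hin : forall x, In x s -> (x < n)%nat)
    by (intros x Hx; apply (Permutation_in _ Hperm), in_seq in Hx; lia).
  set (g := fun x => volume / 4 / d x).
  rewrite (cyc_sum_potential H (fun x y => (H x y + H y x) / 2)
             (fun x => stationary_hitting_time x / 2)).
  2:{ intros x y Hx Hy. assert (Hanti := hitting_time_antisym x y (Hin x Hx) (Hin y Hy)). lra. }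
  apply Rle_trans with (cyc_sum (fun x y => g x + g y) s).
  - rewrite cyc_sum_ends, (lsum_perm g _ _ Hperm).
    replace (seq 0 n) with (seq 0 (S (pred n))) by (f_equal; lia).
    rewrite lsum_seq, !scal_sum. right. apply sum_eq; intros x Hx.
    assert (0 < d x) by (apply wdeg_pos; lia). unfold g. field. lra.
  - apply cyc_sum_le.
    + apply (Permutation_NoDup (Permutation_sym Hperm)), seq_NoDup.
    + rewrite (Permutation_length Hperm), length_seq. exact n_ge2.
    + intros x y Hx Hy Hxy. apply half_commute_time_ge; auto.
Qed.

End RandomWalk.

Theorem proposition1 (n : nat) (adj : nat -> nat -> bool) (c : nat -> nat -> R)
  (H : nat -> nat -> R) :
  (2 <= n)%nat ->
  simple_graph n adj ->
  connected n (fun u v => adj u v = true) ->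
  conductance n adj c ->
  connected n (pos_edge adj c) ->
  (forall u v, (u < n)%nat -> (v < n)%nat -> is_hitting_time n adj c u v (H u v)) ->
  forall s : list nat, Permutation s (seq 0 n) ->
    cyc_sum H s >= / 2 * INR n ^ 2.
Proof.
  (* Connectivity of [G] itself is implied by that of its positive-conductance subgraph. *)
  intros Hn Hs _ Hc Hcon HH s Hperm.
  assert (Hvol := volume_pos n adj c Hn Hs Hc Hcon).
  assert (Hinv := sum_inv_wdeg_ge n adj c Hn Hs Hc Hcon).
  assert (Hcyc := cyc_sum_hitting_time_ge n adj c Hn Hs Hc Hcon H HH s Hperm).
  apply Rle_ge, Rle_trans with (volume n adj c / 2 * (INR n ^ 2 / volume n adj c)).
  - right. field. lra.
  - eapply Rle_trans; [|exact Hcyc]. apply Rmult_le_compat_l; [lra | exact Hinv].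
Qed.
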